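(* Let $K\ge 2$ and $d\ge K-1$ be integers, let $n_1,\dots,n_K\ge 1$ be integers (arbitrary, possibly very different from one another, i.e. the class sizes may be imbalanced), let $N=\sum_{k=1}^K n_k$, and let $E_H>0$, $E_W>0$. Let $\mathbf{W}^*=[\mathbf{w}_1^*,\dots,\mathbf{w}_K^*]\in\mathbb{R}^{d\times K}$ be a fixed scaled simplex equiangular tight frame, i.e. $\mathbf{W}^*=\sqrt{E_W}\sqrt{\tfrac{K}{K-1}}\,\mathbf{U}\left(\mathbf{I}_K-\tfrac1K\mathbf{1}_K\mathbf{1}_K^T\right)$ for some $\mathbf{U}\in\mathbb{R}^{d\times K}$ with $\mathbf{U}^T\mathbf{U}=\mathbf{I}_K$; equivalently it satisfies ${\mathbf{w}_k^*}^T\mathbf{w}_{k'}^*=E_W\left(\tfrac{K}{K-1}\delta_{k,k'}-\tfrac{1}{K-1}\right)$ for all $k,k'\in\{1,\dots,K\}$. Consider the optimization problem over feature vectors $\mathbf{H}=(\mathbf{h}_{k,i})_{1\le k\le K,\,1\le i\le n_k}$, $\mathbf{h}_{k,i}\in\mathbb{R}^d$: $$\min_{\mathbf{H}}\ \frac1N\sum_{k=1}^K\sum_{i=1}^{n_k}\mathcal{L}_{CE}(\mathbf{h}_{k,i},\mathbf{W}^* )\quad\text{s.t.}\quad \|\mathbf{h}_{k,i}\|^2\le E_H\ \ \forall\, 1\le k\le K,\ 1\le i\le n_k,$$ where for a feature $\mathbf{h}_{k,i}$ of class $k$, $\mathcal{L}_{CE}(\mathbf{h}_{k,i},\mathbf{W}^*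 )=-\log\frac{\exp(\mathbf{h}_{k,i}^T\mathbf{w}_k^* )}{\sum_{j=1}^K\exp(\mathbf{h}_{k,i}^T\mathbf{w}_j^* )}$. Then every global minimizer $\mathbf{H}^*=(\mathbf{h}^*_{k,i})$ of this problem satisfies $${\mathbf{h}^*_{k,i}}^T\mathbf{w}^*_{k'}=\sqrt{E_HE_W}\left(\frac{K}{K-1}\delta_{k,k'}-\frac{1}{K-1}\right)\quad\text{for all } 1\le k,k'\le K,\ 1\le i\le n_k,$$ i.e. the optimal features form a simplex equiangular tight frame with the same directions as $\mathbf{W}^*$ and length $\sqrt{E_H}$, regardless of whether the class sizes $n_k$ are balanced.
   Context: $\delta_{k,k'}$ denotes the Kronecker delta ($1$ if $k=k'$, $0$ otherwise), $\mathbf{I}_K$ is the $K\times K$ identity matrix and $\mathbf{1}_K$ is the all-ones vector in $\mathbb{R}^K$. $\mathbf{h}_{k,i}$ represents the (last-layer) feature of the $i$-th training sample of class $k$; the classifier $\mathbf{W}^*$ is fixed and not optimized. $\|\cdot\|$ is the Euclidean norm. *)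

From mathcomp Require Import all_boot all_order all_algebra.
From mathcomp Require Import all_classical all_reals all_analysis.
Set Implicit Arguments. Unset Strict Implicit. Unset Printing Implicit Defensive.
Import Order.TTheory GRing.Theory Num.Theory.
Local Open Scope ring_scope.

Definition dotv (R : realType) (d : nat) (u v : 'cV[R]_d) : R := (u^T *m v) 0 0.

Definition is_scaled_simplex_ETF (R : realType) (d K : nat) (EW : R)
  (W : 'M[R]_(d, K)) : Prop :=
  exists U : 'M[R]_(d, K),
    U^T *m U = 1%:M /\
    W = (Num.sqrt EW * Num.sqrt (K%:R / (K%:R - 1)))
          *: (U *m (1%:M - K%:R^-1 *: const_mx 1)).

Definition CE_loss (R : realType) (d K : nat) (W : 'M[R]_(d, K))
  (k : 'I_K) (h : 'cV[R]_d) : R :=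
  - ln (expR (dotv h (col k W)) / \sum_(j < K) expR (dotv h (col j W))).

Definition features (R : realType) (d K : nat) (n : 'I_K -> nat) :=
  forall k : 'I_K, 'I_(n k) -> 'cV[R]_d.

Definition N_total (K : nat) (n : 'I_K -> nat) : nat := \sum_(k < K) n k.

Definition objective (R : realType) (d K : nat) (n : 'I_K -> nat)
  (W : 'M[R]_(d, K)) (H : features R d n) : R :=
  (N_total n)%:R^-1 * \sum_(k < K) \sum_(i < n k) CE_loss W k (H k i).

Definition feasible (R : realType) (d K : nat) (n : 'I_K -> nat) (EH : R)
  (H : features R d n) : Prop :=
  forall (k : 'I_K) (i : 'I_(n k)), dotv (H k i) (H k i) <= EH.

Definition global_minimizer (R : realType) (d K : nat) (n : 'I_K -> nat)
  (EH : R) (W : 'M[R]_(d, K)) (H : features R d n) : Prop :=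
  feasible EH H /\
  forall H' : features R d n, feasible EH H' -> objective W H <= objective W H'.

From mathcomp Require Import all_boot all_order all_algebra.
From mathcomp Require Import all_classical all_reals all_analysis.
From mathcomp Require Import ring lra.
Set Implicit Arguments. Unset Strict Implicit. Unset Printing Implicit Defensive.
Import Order.TTheory GRing.Theory Num.Theory.
Local Open Scope ring_scope.

(* The Gram matrix of a scaled simplex ETF is [EW * K/(K-1)] times the centering
   matrix, so its columns sum to zero and so do the logits of any feature.  A
   global minimizer is optimal sample by sample; comparing the loss of [h] with
   that of the aligned feature [t w_k], [t = sqrt(EH/EW)], whose off-class logit
   gaps all coincide, the tangent-line bound for [expR] at those gaps forces
   [<h, w_k> >= sqrt(EH EW)].  Together with [|h|^2 <= EH] this gives
   [|h - t w_k|^2 <= 0], hence [h = t w_k], whose inner products with [W] are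
   read off from the Gram matrix. *)

Section InnerProduct.
Variables (R : realType) (d : nat).
Implicit Types u v : 'cV[R]_d.

Lemma dotvE u v : dotv u v = \sum_l u l 0 * v l 0.
Proof. by rewrite /dotv !mxE; apply: eq_bigr => l _; rewrite !mxE. Qed.

Lemma dotvC u v : dotv u v = dotv v u.
Proof. by rewrite !dotvE; apply: eq_bigr => l _; rewrite mulrC. Qed.

Lemma dotvZl a u v : dotv (a *: u) v = a * dotv u v.
Proof. by rewrite !dotvE mulr_sumr; apply: eq_bigr => l _; rewrite !mxE mulrA. Qed.

Lemma dotvZr a u v : dotv u (a *: v) = a * dotv u v.
Proof. by rewrite dotvC dotvZl dotvC. Qed.

Lemma dotvv_ge0 u : 0 <= dotv u u.
Proof. by rewrite dotvE sumr_ge0 // => l _; rewrite -expr2 sqr_ge0. Qed.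

Lemma dotvv_eq0 u : dotv u u = 0 -> u = 0.
Proof.
rewrite dotvE => /psumr_eq0P u0; apply/matrixP => l j; rewrite (ord1 j) mxE.
have /eqP := u0 (fun m _ => ltac:(by rewrite -expr2 sqr_ge0)) l isT.
by rewrite mulf_eq0 orbb => /eqP.
Qed.

Lemma dotvvB u v :
  dotv (u - v) (u - v) = dotv u u - 2 * dotv u v + dotv v v.
Proof.
rewrite !dotvE mulr_sumr -sumrB -big_split /=.
by apply: eq_bigr => l _; rewrite !mxE; ring.
Qed.

Lemma eq_of_dotv_le u v : dotv u u <= dotv v v -> dotv v v <= dotv u v -> u = v.
Proof.
move=> uu_le vv_le; apply/eqP; rewrite -subr_eq0; apply/eqP/dotvv_eq0.
by apply/le_anti; rewrite dotvv_ge0 dotvvB andbT; lra.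
Qed.

Lemma dotv_col K (A : 'M[R]_(d, K)) j j' :
  dotv (col j A) (col j' A) = (A^T *m A) j j'.
Proof. by rewrite dotvE !mxE; apply: eq_bigr => l _; rewrite !mxE. Qed.

Lemma sum_dotv_col K (A : 'M[R]_(d, K)) u :
  \sum_j dotv u (col j A) = dotv u (A *m const_mx 1).
Proof.
rewrite dotvE; under eq_bigr do rewrite dotvE.
rewrite exchange_big; apply: eq_bigr => l _ /=.
by rewrite !mxE mulr_sumr; apply: eq_bigr => j _; rewrite !mxE mulr1.
Qed.

End InnerProduct.

Section CenteringMatrix.
Variables (R : numFieldType) (K : nat).

Definition centering_mx : 'M[R]_K := 1%:M - K%:R^-1 *: const_mx 1.

Lemma centering_mxE i j : centering_mx i j = (i == j)%:R - K%:R^-1.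
Proof. by rewrite !mxE mulr1. Qed.

Lemma trmx_centering : centering_mx^T = centering_mx.
Proof. by apply/matrixP => i j; rewrite mxE !centering_mxE eq_sym. Qed.

Lemma sum_centering_row i : \sum_j centering_mx i j = 0.
Proof.
have K_gt0 : (0 < K)%N := leq_ltn_trans (leq0n _) (ltn_ord i).
under eq_bigr do rewrite centering_mxE.
rewrite sumrB sumr_const card_ord -[_ *+ K]mulr_natr mulVf ?pnatr_eq0 -?lt0n //.
by rewrite (bigD1 i) //= eqxx big1 ?addr0 ?subrr // => j /negbTE; rewrite eq_sym => ->.
Qed.

Lemma centering_mx_const : centering_mx *m const_mx 1 = 0 :> 'cV_K.
Proof.
apply/matrixP => i j; rewrite !mxE -[RHS](sum_centering_row i).
by apply: eq_bigr => l _; rewrite [const_mx _ _ _]mxE mulr1.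
Qed.

Lemma mulmx_centering : centering_mx *m centering_mx = centering_mx.
Proof.
apply/matrixP => i j; rewrite mxE.
under eq_bigr do rewrite [centering_mx _ j]centering_mxE mulrBr.
rewrite sumrB -mulr_suml sum_centering_row mul0r subr0.
rewrite (bigD1 j) //= eqxx mulr1 big1 ?addr0 // => l /negbTE.
by rewrite eq_sym => ->; rewrite mulr0.
Qed.

End CenteringMatrix.

Section CrossEntropy.
Variable R : realType.

Lemma sum_expR_gt0 {I : finType} (i : I) (f : I -> R) : 0 < \sum_j expR (f j).
Proof.
by rewrite (bigD1 i) //= ltr_pwDl ?expR_gt0 // sumr_ge0 // => j _; exact: expR_ge0.
Qed.

Lemma CE_lossE d K (W : 'M[R]_(d, K)) k h :
  CE_loss W k h = ln (\sum_j expR (dotv h (col j W) - dotv h (col k W))).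
Proof.
rewrite /CE_loss -lnV; last by rewrite posrE divr_gt0 ?expR_gt0 ?(sum_expR_gt0 k).
rewrite invf_div mulr_suml -expRN; congr ln.
by apply: eq_bigr => j _; rewrite -expRD.
Qed.

Lemma sum_le_of_sum_expR_le {I : finType} (k : I) (b p : I -> R) (m : R) :
  (forall j, j != k -> p j = m) -> b k = p k ->
  \sum_j expR (b j) <= \sum_j expR (p j) -> \sum_j b j <= \sum_j p j.
Proof.
move=> p_const bk_pk sum_le.
(* [expR m] may replace [expR (p j)]: they agree for [j != k], and [b k - p k = 0]. *)
have tangent j : expR (p j) + expR m * (b j - p j) <= expR (b j).
  have -> : expR m * (b j - p j) = expR (p j) * (b j - p j).
    by have [->|/p_const ->] := eqVneq j k; rewrite ?bk_pk ?subrr ?mulr0.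
  have -> : expR (b j) = expR (p j) * expR (b j - p j).
    by rewrite -expRD addrC subrK.
  rewrite -[X in X + _]mulr1 -mulrDr.
  by apply: ler_wpM2l; [exact: expR_ge0 | exact: expR_ge1Dx].
have : \sum_j (expR (p j) + expR m * (b j - p j)) <= \sum_j expR (b j).
  by apply: ler_sum => j _; exact: tangent.
rewrite big_split /= -mulr_sumr => sum_tangent.
have : expR m * \sum_j (b j - p j) <= 0 by lra.
by rewrite pmulr_rle0 ?expR_gt0 // sumrB subr_le0.
Qed.

End CrossEntropy.

Section SimplexETF.
Variables (R : realType) (d K : nat) (EW : R) (W : 'M[R]_(d, K)).
Hypothesis W_ETF : is_scaled_simplex_ETF EW W.

Lemma simplex_ETF_const : W *m const_mx 1 = 0 :> 'cV_d.
Proof.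
case: W_ETF => U [_ ->]; rewrite -/(centering_mx R K).
by rewrite -scalemxAl -mulmxA centering_mx_const mulmx0 scaler0.
Qed.

Lemma sum_dotv_simplex_ETF u : \sum_j dotv u (col j W) = 0.
Proof. by rewrite sum_dotv_col simplex_ETF_const dotvE big1 // => l _; rewrite mxE mulr0. Qed.

Hypotheses (K_gt1 : (1 < K)%N) (EW_ge0 : 0 <= EW).

Let K1_gt0 : 0 < K%:R - 1 :> R.
Proof. by rewrite subr_gt0 ltr1n. Qed.

Lemma simplex_ETF_gram :
  W^T *m W = (EW * (K%:R / (K%:R - 1))) *: centering_mx R K.
Proof.
case: W_ETF => U [UU ->]; rewrite -/(centering_mx R K).
rewrite [(_ *: _)^T]linearZ /= trmx_mul -scalemxAl -scalemxAr scalerA.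
rewrite -mulmxA (mulmxA U^T) UU mul1mx trmx_centering mulmx_centering.
by rewrite -expr2 exprMn !sqr_sqrtr // divr_ge0 // ltW.
Qed.

Lemma dotv_simplex_ETF j j' : dotv (col j W) (col j' W) =
  EW * (K%:R / (K%:R - 1) * (if j == j' then 1 else 0) - (K%:R - 1)^-1).
Proof.
have K_neq0 : K%:R != 0 :> R by rewrite pnatr_eq0 -lt0n ltnW.
rewrite dotv_col simplex_ETF_gram mxE centering_mxE.
by case: (j == j'); rewrite /= ?mulr1 ?mulr0; field; rewrite K_neq0 gt_eqF.
Qed.

Lemma dotvv_simplex_ETF j : dotv (col j W) (col j W) = EW.
Proof. by rewrite dotv_simplex_ETF eqxx; field; rewrite gt_eqF. Qed.

Lemma dotv_ge_of_CE_loss_le h t k :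
  CE_loss W k h <= CE_loss W k (t *: col k W) -> t * EW <= dotv h (col k W).
Proof.
rewrite !CE_lossE ler_ln ?posrE ?(sum_expR_gt0 k) // => sum_le.
have p_const j : j != k ->
    dotv (t *: col k W) (col j W) - dotv (t *: col k W) (col k W) =
    t * (EW * - (K%:R - 1)^-1 - EW).
  move=> /negbTE jk; rewrite !dotvZl dotv_simplex_ETF dotvv_simplex_ETF eq_sym jk.
  by rewrite mulr0 sub0r -mulrBr.
have := sum_le_of_sum_expR_le p_const (etrans (subrr _) (esym (subrr _))) sum_le.
rewrite !sumrB !sum_dotv_simplex_ETF !sumr_const card_ord !sub0r lerN2.
by rewrite dotvZl dotvv_simplex_ETF ler_pMn2r // ltnW.
Qed.

End SimplexETF.

Section Minimizer.
Variables (R : realType) (d K : nat) (n : 'I_K -> nat).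

Lemma sum_samples_update (F G : forall k, 'I_(n k) -> R) k (i : 'I_(n k)) :
  (forall k2 (i2 : 'I_(n k2)), ~~ ((k2 == k) && (val i2 == val i)) -> F k2 i2 = G k2 i2) ->
  \sum_k2 \sum_i2 F k2 i2 - F k i = \sum_k2 \sum_i2 G k2 i2 - G k i.
Proof.
move=> FG; rewrite (bigD1 k) // [in RHS](bigD1 k) //= (bigD1 i) // [in RHS](bigD1 i) //=.
have -> : \sum_(i2 < n k | i2 != i) F k i2 = \sum_(i2 < n k | i2 != i) G k i2.
  by apply: eq_bigr => i2 i2_neq; rewrite FG // eqxx.
have -> : \sum_(k2 < K | k2 != k) \sum_i2 F k2 i2 = \sum_(k2 < K | k2 != k) \sum_i2 G k2 i2.
  by apply: eq_bigr => k2 /negbTE k2k; apply: eq_bigr => i2 _; rewrite FG // k2k.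
lra.
Qed.

Lemma global_minimizer_sample EH (W : 'M[R]_(d, K)) (H : features R d n) k i h :
  global_minimizer EH W H -> dotv h h <= EH -> CE_loss W k (H k i) <= CE_loss W k h.
Proof.
case=> feasH minH hh.
pose H' : features R d n :=
  fun k2 i2 => if (k2 == k) && (val i2 == val i) then h else H k2 i2.
have feasH' : feasible EH H' by move=> k2 i2; rewrite /H'; case: ifP.
have N_gt0 : (0 < N_total n)%N.
  by rewrite /N_total (bigD1 k) //= addn_gt0 (leq_ltn_trans _ (ltn_ord i)).
have := minH H' feasH'; rewrite /objective ler_pM2l ?invr_gt0 ?ltr0n //.
have H'_eq k2 (i2 : 'I_(n k2)) : ~~ ((k2 == k) && (val i2 == val i)) ->
    CE_loss W k2 (H k2 i2) = CE_loss W k2 (H' k2 i2).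
  by rewrite /H' => /negbTE ->.
have H'_ki : H' k i = h by rewrite /H' !eqxx.
have := sum_samples_update H'_eq; rewrite H'_ki.
lra.
Qed.

End Minimizer.

Theorem theorem1 (R : realType) (K d : nat) (n : 'I_K -> nat) (EH EW : R)
  (W : 'M[R]_(d, K)) (H : features R d n) :
  (2 <= K)%N -> (K - 1 <= d)%N -> (forall k, (1 <= n k)%N) ->
  0 < EH -> 0 < EW ->
  is_scaled_simplex_ETF EW W ->
  global_minimizer EH W H ->
  forall (k k' : 'I_K) (i : 'I_(n k)),
    dotv (H k i) (col k' W) =
      Num.sqrt (EH * EW) *
        (K%:R / (K%:R - 1) * (if k == k' then 1 else 0) - (K%:R - 1)^-1).
Proof.
(* The bounds on [d] and [n] only matter for the existence of a minimizer. *)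
move=> K_gt1 _ _ EH_gt0 EW_gt0 W_ETF minH k k' i.
have EW_ge0 := ltW EW_gt0.
have sqrtEW_neq0 : Num.sqrt EW != 0 by rewrite gt_eqF ?sqrtr_gt0.
pose t := Num.sqrt EH / Num.sqrt EW.
have tEW : t * EW = Num.sqrt (EH * EW).
  by rewrite sqrtrM ?ltW // /t -{2}(sqr_sqrtr EW_ge0) expr2 mulrA divfK.
have ttEW : t * (t * EW) = EH.
  by rewrite tEW sqrtrM ?ltW // mulrACA mulVf // mulr1 -expr2 sqr_sqrtr ?ltW.
have h0_norm : dotv (t *: col k W) (t *: col k W) = EH.
  by rewrite dotvZl dotvZr (dotvv_simplex_ETF W_ETF).
have h0_feas : dotv (t *: col k W) (t *: col k W) <= EH by rewrite h0_norm.
have loss_le := global_minimizer_sample i minH h0_feas.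
have aligned := dotv_ge_of_CE_loss_le W_ETF K_gt1 EW_ge0 loss_le.
have -> : H k i = t *: col k W.
  apply: eq_of_dotv_le; first by rewrite h0_norm; exact: minH.1.
  by rewrite h0_norm dotvZr -ttEW ler_wpM2l // divr_ge0 ?sqrtr_ge0.
by rewrite dotvZl (dotv_simplex_ETF W_ETF) // mulrA tEW.
Qed.
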